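(* Assume $e_{-1}+e_{+1}<1$. For any two measurable classifiers $f,g:\mathcal X\to\{-1,+1\}$, $$\mathbb E_{\tilde{\mathcal D}}[\mathbb 1_{\mathrm{peer}}(f(X),\tilde Y)]\le\mathbb E_{\tilde{\mathcal D}}[\mathbb 1_{\mathrm{peer}}(g(X),\tilde Y)]\iff R_{-1}(f)+R_{+1}(f)\le R_{-1}(g)+R_{+1}(g),$$ i.e. minimizing $\mathbb E_{\tilde{\mathcal D}}[\mathbb 1_{\mathrm{peer}}(f(X),\tilde Y)]$ is equivalent to minimizing $R_{-1}(f)+R_{+1}(f)$.
   Context: Let $\mathcal X\subseteq\mathbb R^d$ and let $(X,Y)$ be a random pair with distribution $\mathcal D$ on $\mathcal X\times\{-1,+1\}$, with $p:=\mathbb P(Y=+1)\in(0,1)$. A noisy label $\tilde Y\in\{-1,+1\}$ is generated with noise rates $e_{+1}:=\mathbb P(\tilde Y=-1\mid Y=+1)$, $e_{-1}:=\mathbb P(\tilde Y=+1\mid Y=-1)$, where $\tilde Y$ is conditionally independent of $X$ given $Y$; $\tilde{\mathcal D}$ is the distribution of $(X,\tilde Y)$. For a classifier $f$, $R_{+1}(f):=\mathbb P(f(X)=-1\mid Y=+1)$ and $R_{-1}(f):=\mathbb P(f(X)=+1\mid Y=-1)$. The 0-1 loss is $\mathbb 1(a,b)=1$ if $a\neq b$ and $0$ otherwise, and $$\mathbb E_{\tilde{\mathcal D}}[\mathbb 1_{\mathrm{peer}}(f(X),\tilde Y)]:=\mathbb E[\mathbb 1(f(X),\tilde Y)]-\mathbb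 E[\mathbb 1(f(X_1),\tilde Y_2)],$$ where $(X,\tilde Y),(X_1,\tilde Y_1),(X_2,\tilde Y_2)$ are i.i.d. draws from $\tilde{\mathcal D}$. *)

From HB Require Import structures.
From mathcomp Require Import all_boot all_order all_algebra.
From mathcomp Require Import all_classical all_reals all_analysis.
Set Implicit Arguments. Unset Strict Implicit. Unset Printing Implicit Defensive.
Import Order.TTheory GRing.Theory Num.Theory.
Local Open Scope classical_set_scope.
Local Open Scope ring_scope.

(* Labels {-1,+1} are encoded as bool: true = +1, false = -1. *)

Section peer.
Context {R : realType} {d : measure_display} {T : measurableType d}.
Variable (P : probability T R).

Definition Pr (A : set T) : R := fine (P A).

Definition cond_pr (A B : set T) : R := Pr (A `&` B) / Pr B.

Variables (n : nat) (X : T -> n.-tuple R) (Y Yt : T -> bool).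

Definition e_pos : R := cond_pr [set w | Yt w = false] [set w | Y w = true].
Definition e_neg : R := cond_pr [set w | Yt w = true] [set w | Y w = false].

Definition R_pos (f : n.-tuple R -> bool) : R :=
  cond_pr [set w | f (X w) = false] [set w | Y w = true].
Definition R_neg (f : n.-tuple R -> bool) : R :=
  cond_pr [set w | f (X w) = true] [set w | Y w = false].

Definition loss01 (a b : bool) : R := (a != b)%:R.

(* E_{D~}[1_peer(f(X), Yt)] = E[1(f(X),Yt)] - E[1(f(X_1),Yt_2)],
   where (X_1,Yt_1),(X_2,Yt_2) are independent draws from D~, realised as
   two coordinates of the product probability space (T*T, P \x P). *)
Definition peer_risk (f : n.-tuple R -> bool) : R :=
  fine (\int[P]_w (loss01 (f (X w)) (Yt w))%:E)
  - fine (\int[(P \x P)%E]_w (loss01 (f (X w.1)) (Yt w.2))%:E).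

Definition cond_indep_given_Y : Prop :=
  forall (A : set (n.-tuple R)) (y yt : bool), measurable A ->
    (P (X @^-1` A `&` [set w | Y w = y] `&` [set w | Yt w = yt])
       * P [set w | Y w = y]
     = P (X @^-1` A `&` [set w | Y w = y])
       * P ([set w | Y w = y] `&` [set w | Yt w = yt]))%E.

End peer.

From HB Require Import structures.
From mathcomp Require Import all_boot all_order all_algebra.
From mathcomp Require Import all_classical all_reals all_analysis.
From mathcomp Require Import ring lra.
Set Implicit Arguments.
Unset Strict Implicit.
Unset Printing Implicit Defensive.
Import Order.TTheory GRing.Theory Num.Theory.
Local Open Scope classical_set_scope.
Local Open Scope ring_scope.

(* The second expectation of the peer loss is taken under the product of the
   marginals of B = {f(X) = +1} and C = {Yt = +1}, so the peer loss of f is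
   -2 (P(B & C) - P(B) P(C)), minus twice the covariance of their indicators.
   As B and C are independent given the binary label Y, with p = P(Y = +1)
   this covariance factors as
   p (1 - p) (P(B | Y=+1) - P(B | Y=-1)) (P(C | Y=+1) - P(C | Y=-1))
   = p (1 - p) (1 - e_{-1} - e_{+1}) (1 - R_{-1}(f) - R_{+1}(f)),
   where p (1 - p) (1 - e_{-1} - e_{+1}) > 0 does not depend on f. *)

Lemma setC_eq_true (U : Type) (b : U -> bool) :
  ~` [set w | b w] = [set w | b w = false].
Proof. by apply/seteqP; split => w /=; case: (b w). Qed.

Section probability_of_events.
Context {R : realType} {d : measure_display} {T : measurableType d}.
Variable P : probability T R.
Implicit Types A B C Z : set T.

Lemma PrE A : measurable A -> P A = (Pr P A)%:E.
Proof. by move=> mA; rewrite /Pr fineK // fin_num_measure. Qed.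

Lemma Pr_setT : Pr P setT = 1.
Proof. by rewrite /Pr probability_setT. Qed.

Lemma Pr_setC A : measurable A -> Pr P (~` A) = 1 - Pr P A.
Proof. by move=> mA; rewrite /Pr probability_setC // fineB // fin_num_measure. Qed.

Lemma Pr_setU A B : measurable A -> measurable B -> A `&` B = set0 ->
  Pr P (A `|` B) = Pr P A + Pr P B.
Proof.
move=> mA mB AB0; apply: EFin_inj.
by rewrite EFinD -!PrE ?measureU //; exact: measurableU.
Qed.

Lemma Pr_setIC A B : measurable A -> measurable B ->
  Pr P A = Pr P (A `&` B) + Pr P (A `&` ~` B).
Proof.
move=> mA mB; rewrite addrC -Pr_setU.
- by rewrite -setIUr setUCl setIT.
- by apply: measurableI => //; exact: measurableC.
- exact: measurableI.
- by rewrite setIACA setICl setI0.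
Qed.

Lemma cond_prK A Z : Pr P Z != 0 -> cond_pr P A Z * Pr P Z = Pr P (A `&` Z).
Proof. by move=> Z0; rewrite /cond_pr mulfVK. Qed.

Lemma cond_prC A Z : measurable A -> measurable Z -> Pr P Z != 0 ->
  cond_pr P (~` A) Z = 1 - cond_pr P A Z.
Proof.
move=> mA mZ Z0; rewrite /cond_pr.
have -> : Pr P (~` A `&` Z) = Pr P Z - Pr P (A `&` Z).
  by rewrite (Pr_setIC mZ mA) (setIC Z A) (setIC Z (~` A)); ring.
by field.
Qed.

Lemma expectation_loss01 (b c : T -> bool) :
  measurable [set w | b w] -> measurable [set w | c w] ->
  fine (\int[P]_w (loss01 (b w) (c w))%:E)
  = Pr P [set w | b w] + Pr P [set w | c w]
    - 2 * Pr P ([set w | b w] `&` [set w | c w]).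
Proof.
set B := [set w | b w]; set C := [set w | c w] => mB mC.
have mBC : measurable (B `&` ~` C) by apply: measurableI => //; exact: measurableC.
have mCB : measurable (~` B `&` C) by apply: measurableI => //; exact: measurableC.
have neqE : [set w | b w != c w] = (B `&` ~` C) `|` (~` B `&` C).
  by apply/seteqP; split => w; rewrite /B /C /=; case: (b w); case: (c w);
    intuition discriminate.
have loss01E w : loss01 (b w) (c w) = \1_[set w | b w != c w] w.
  by rewrite indicE /loss01 mem_setE.
under eq_fun do rewrite loss01E.
rewrite integral_indic //; last by rewrite neqE; exact: measurableU.
rewrite setIT neqE -/(Pr P _) Pr_setU //; last by rewrite setIACA setICr set0I.
by rewrite (setIC (~` B)) (Pr_setIC mB mC) (Pr_setIC mC mB) (setIC C B); ring.
Qed.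

Lemma covariance_cond_indep B C Z :
  measurable B -> measurable C -> measurable Z -> 0 < Pr P Z < 1 ->
  Pr P (B `&` Z `&` C) * Pr P Z = Pr P (B `&` Z) * Pr P (Z `&` C) ->
  Pr P (B `&` ~` Z `&` C) * Pr P (~` Z)
    = Pr P (B `&` ~` Z) * Pr P (~` Z `&` C) ->
  Pr P (B `&` C) - Pr P B * Pr P C
  = Pr P Z * (1 - Pr P Z) * (cond_pr P B Z - cond_pr P B (~` Z))
    * (cond_pr P C Z - cond_pr P C (~` Z)).
Proof.
move=> mB mC mZ /andP[Z_gt0 Z_lt1] indepZ indepZC.
have mZC : measurable (~` Z) by exact: measurableC.
have Z0 : Pr P Z != 0 by rewrite gt_eqF.
have ZC0 : Pr P (~` Z) != 0 by rewrite Pr_setC // subr_eq0 eq_sym lt_eqF.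
have joint_cond W : Pr P W != 0 ->
    Pr P (B `&` W `&` C) * Pr P W = Pr P (B `&` W) * Pr P (W `&` C) ->
    Pr P (B `&` C `&` W) = cond_pr P B W * cond_pr P C W * Pr P W.
  move=> W0 indepW; rewrite setIAC -(mulfK W0 (Pr P _)) indepW.
  by rewrite (setIC W C) -(cond_prK B W0) -(cond_prK C W0); field.
have BCE : Pr P (B `&` C) = Pr P (B `&` C `&` Z) + Pr P (B `&` C `&` ~` Z).
  by apply: Pr_setIC => //; exact: measurableI.
rewrite BCE (joint_cond Z) // (joint_cond (~` Z)) //.
rewrite (Pr_setIC mB mZ) (Pr_setIC mC mZ) -!cond_prK //.
by rewrite Pr_setC //; ring.
Qed.

End probability_of_events.

Section independent_copies.
Context {R : realType} {d : measure_display} {T : measurableType d}.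
Variable P : probability T R.

Lemma Pr_setX (A1 A2 : set T) : measurable A1 -> measurable A2 ->
  Pr (P \x P)%E (A1 `*` A2) = Pr P A1 * Pr P A2.
Proof.
move=> mA1 mA2; rewrite /Pr -fineM ?fin_num_measure //.
by congr fine; exact: product_measure1E.
Qed.

Lemma expectation_loss01_indep (b c : T -> bool) :
  measurable [set w | b w] -> measurable [set w | c w] ->
  fine (\int[(P \x P)%E]_w (loss01 (b w.1) (c w.2))%:E)
  = Pr P [set w | b w] + Pr P [set w | c w]
    - 2 * (Pr P [set w | b w] * Pr P [set w | c w]).
Proof.
move=> mB mC.
have fstE : [set w : T * T | b w.1] = [set w | b w] `*` setT.
  by apply/seteqP; split => w //= [].
have sndE : [set w : T * T | c w.2] = setT `*` [set w | c w].
  by apply/seteqP; split => w //= [].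
have mfst : measurable [set w : T * T | b w.1] by rewrite fstE; exact: measurableX.
have msnd : measurable [set w : T * T | c w.2] by rewrite sndE; exact: measurableX.
have -> := expectation_loss01 (P \x P)%E mfst msnd.
rewrite fstE sndE -setXI setIT setTI !Pr_setX //.
by rewrite Pr_setT mulr1 mul1r.
Qed.

Lemma peer_loss_covariance (b c : T -> bool) :
  measurable [set w | b w] -> measurable [set w | c w] ->
  fine (\int[P]_w (loss01 (b w) (c w))%:E)
  - fine (\int[(P \x P)%E]_w (loss01 (b w.1) (c w.2))%:E)
  = -2 * (Pr P ([set w | b w] `&` [set w | c w])
          - Pr P [set w | b w] * Pr P [set w | c w]).
Proof.
by move=> mB mC; rewrite expectation_loss01 // expectation_loss01_indep //; ring.
Qed.

End independent_copies.

Section peer_risk_factorization.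
Context {R : realType} {d : measure_display} {T : measurableType d}.
Variables (P : probability T R) (n : nat) (Xs : set (n.-tuple R)).
Variables (X : T -> n.-tuple R) (Y Yt : T -> bool).
Hypotheses (mXs : measurable Xs) (XsX : forall w, Xs (X w)).
Hypotheses (mX : measurable_fun setT X) (mY : measurable_fun setT Y).
Hypothesis mYt : measurable_fun setT Yt.
Hypothesis Y_nondeg : 0 < Pr P [set w | Y w] < 1.
Hypothesis indepXYt : cond_indep_given_Y P X Y Yt.

Let measurable_level (h : T -> bool) (c : bool) :
  measurable_fun setT h -> measurable [set w | h w = c].
Proof.
by move=> mh; rewrite -(setTI [set w | h w = c]); apply: (mh measurableT [set c]).
Qed.

Let preimage_classifier (f : n.-tuple R -> bool) :
  X @^-1` (Xs `&` f @^-1` [set true]) = [set w | f (X w)].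
Proof. by apply/seteqP; split => w /= [] //. Qed.

Lemma peer_risk_factor (f : n.-tuple R -> bool) : measurable_fun Xs f ->
  peer_risk P X Yt f
  = -2 * (Pr P [set w | Y w] * (1 - Pr P [set w | Y w])
          * (1 - e_neg P Y Yt - e_pos P Y Yt))
    * (1 - R_neg P X Y f - R_pos P X Y f).
Proof.
move=> mf.
set B := [set w | f (X w)]; set Y1 := [set w | Y w]; set C := [set w | Yt w].
have mfX : measurable (Xs `&` f @^-1` [set true]) := mf mXs [set true] I.
have mB : measurable B.
  by rewrite /B -preimage_classifier -(setTI (X @^-1` _)); exact: mX.
have mY1 : measurable Y1 := measurable_level true mY.
have mC : measurable C := measurable_level true mYt.
have /andP[Y1_gt0 Y1_lt1] := Y_nondeg.
have Y10 : Pr P Y1 != 0 by rewrite gt_eqF.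
have Y00 : Pr P (~` Y1) != 0 by rewrite Pr_setC // subr_eq0 eq_sym lt_eqF.
have indep y : Pr P (B `&` [set w | Y w = y] `&` C) * Pr P [set w | Y w = y]
    = Pr P (B `&` [set w | Y w = y]) * Pr P ([set w | Y w = y] `&` C).
  have mYy : measurable [set w | Y w = y] := measurable_level y mY.
  apply: EFin_inj; rewrite !EFinM -!PrE; try by repeat apply: measurableI.
  by have := indepXYt y true mfX; rewrite preimage_classifier.
rewrite /peer_risk peer_loss_covariance // (covariance_cond_indep mB mC mY1) //;
  [| exact: (indep true) | by rewrite setC_eq_true; exact: (indep false)].
rewrite /R_neg /R_pos /e_neg /e_pos -!setC_eq_true -/B -/Y1 -/C.
by rewrite !cond_prC //; ring.
Qed.

End peer_risk_factorization.

Theorem lemma3 (R : realType) (dT : measure_display) (T : measurableType dT)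
  (P : probability T R) (n : nat) (Xs : set (n.-tuple R))
  (X : T -> n.-tuple R) (Y Yt : T -> bool) :
  measurable Xs ->
  (forall w, Xs (X w)) ->
  measurable_fun setT X -> measurable_fun setT Y -> measurable_fun setT Yt ->
  0 < Pr P [set w | Y w = true] < 1 ->
  cond_indep_given_Y P X Y Yt ->
  e_neg P Y Yt + e_pos P Y Yt < 1 ->
  forall f g : n.-tuple R -> bool,
    measurable_fun Xs f -> measurable_fun Xs g ->
    (peer_risk P X Yt f <= peer_risk P X Yt g <->
     R_neg P X Y f + R_pos P X Y f <= R_neg P X Y g + R_pos P X Y g).
Proof.
move=> mXs XsX mX mY mYt Y_nondeg indep noise_lt1 f g mf mg.
rewrite !(peer_risk_factor mXs XsX mX mY mYt Y_nondeg indep) //.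
have /andP[Y1_gt0 Y1_lt1] : 0 < Pr P [set w | Y w] < 1 := Y_nondeg.
have K_gt0 : 0 < Pr P [set w | Y w] * (1 - Pr P [set w | Y w])
                  * (1 - e_neg P Y Yt - e_pos P Y Yt).
  by rewrite !mulr_gt0 //; lra.
rewrite ler_nM2l; last by rewrite mulNr oppr_lt0 mulr_gt0.
by split => ?; lra.
Qed.
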